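(* Fix a robot $k$ and a group $G_{\hat k}$, $\hat k\in\{1,\dots,m-1\}$, containing $k$, whose other members are $l_1,\dots,l_j$ with $j\ge 2$. Let $d>0$ and let $\mathrm{Rot}_{l_1,l_2,k}(\pi,\pi,0)$ denote any composition of the rotation-only operations $h_1,\dots,h_{m-1},f_m$ that changes the orientations of $l_1$ and $l_2$ by $\pi$ and that of $k$ by $0$ (mod $2\pi$), leaving all positions unchanged (such a composition exists). Then the sequence $P_1(d)=(g_{\hat k}(d),\,\mathrm{Rot}_{l_1,l_2,k}(\pi,\pi,0),\,g_{\hat k}(d))$ has the following net effect: every robot not in $G_{\hat k}$ has unchanged position; robots $l_1$ and $l_2$ end at their initial positions; robot $k$ is translated by $2d(\cos\theta_k,\sin\theta_k)$ (with $\theta_k$ its initial orientation) and has unchanged orientation. Thus only robots among $l_3,\dots,l_j,k$ can change position.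
   Context: A swarm of $n$ planar robots; robot $j$ has state $(x_j,y_j,\theta_j)$, $\theta_j$ mod $2\pi$; all robots have the same turning radius $r>0$. Groups $G_1,\dots,G_m$ with activation vectors $\alpha_i\in\{0,1\}^n$ ($\alpha_{i,j}=1$ iff robot $j\in G_i$); the patterns $(\alpha_{1,j},\dots,\alpha_{m-1,j})$ are pairwise distinct, none all zeros, none all ones; $G_m=\emptyset$. Dynamics: one group $\nu(t)$ active at a time, input $u(t)>0$; with $a_j=\alpha_{\nu(t),j}$: $\dot x_j=a_j\cos\theta_j u$, $\dot y_j=a_j\sin\theta_j u$, $\dot\theta_j=(1-a_j)u/r$. $f_m(\varphi)$ = activate $G_m$ with $\int u\,dt=r\varphi$ (all robots rotate in place by $\varphi$). $h_i(\varphi)$ ($i<m$): an activation sequence whose net effect leaves members of $G_i$ unchanged and keeps non-members in place with orientation increased by $\varphi$ mod $2\pi$. $g_i(d)$ ($i<m$, $d\in\mathbb R$): an activation sequence whose net effect translates each member $j$ of $G_i$ by $d(\cos\theta_j,\sin\theta_j)$ with unchanged orientation and leaves non-members unchanged. Sequences are executed left to right. *)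

From Stdlib Require Import Reals Lra List ZArith.
Open Scope R_scope.

(* State of one robot: position (px,py), orientation th (a real, read mod 2*PI). *)
Record rstate := mkR { px : R; py : R; th : R }.

(* Configuration of the swarm: robot j (0 <= j < n) has state c j. *)
Definition config := nat -> rstate.

Definition angle_eq (a b : R) : Prop := exists z : Z, a = b + 2 * PI * IZR z.

(* Activation vectors: alpha i j = true iff robot j belongs to group G_i
   (groups indexed 1..m). *)

(* Exact effect of activating group i with integral of u equal to U (> 0):
   this is the exact solution of the dynamics on that interval, since members
   keep their orientation and non-members keep their position. *)
Definition step (alpha : nat -> nat -> bool) (r : R) (i : nat) (U : R)
  (c : config) : config :=
  fun j => let s := c j in
    if alpha i j
    then mkR (px s + U * cos (th s)) (py s + U * sin (th s)) (th s)
    else mkR (px s) (py s) (th s + U / r).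

(* An activation sequence: list of (group index, integral of u), executed
   left to right. *)
Definition actseq := list (nat * R).

Definition run (alpha : nat -> nat -> bool) (r : R) (sq : actseq) (c : config)
  : config :=
  fold_left (fun c p => step alpha r (fst p) (snd p) c) sq c.

Definition valid_seq (m : nat) (sq : actseq) : Prop :=
  Forall (fun p => (1 <= fst p <= m)%nat /\ 0 < snd p) sq.

Definition groups_ok (n m : nat) (alpha : nat -> nat -> bool) : Prop :=
  (2 <= m)%nat /\
  (forall j, (j < n)%nat -> alpha m j = false) /\
  (forall j1 j2, (j1 < n)%nat -> (j2 < n)%nat -> j1 <> j2 ->
     exists i, (1 <= i <= m - 1)%nat /\ alpha i j1 <> alpha i j2) /\
  (forall j, (j < n)%nat ->
     (exists i, (1 <= i <= m - 1)%nat /\ alpha i j = true) /\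
     (exists i, (1 <= i <= m - 1)%nat /\ alpha i j = false)).

Definition is_g (n m : nat) (alpha : nat -> nat -> bool) (r : R)
  (i : nat) (d : R) (sq : actseq) : Prop :=
  valid_seq m sq /\
  forall (c : config) j, (j < n)%nat ->
    let c' := run alpha r sq c in
    if alpha i j then
      px (c' j) = px (c j) + d * cos (th (c j)) /\
      py (c' j) = py (c j) + d * sin (th (c j)) /\
      angle_eq (th (c' j)) (th (c j))
    else
      px (c' j) = px (c j) /\ py (c' j) = py (c j) /\
      angle_eq (th (c' j)) (th (c j)).

Definition is_h (n m : nat) (alpha : nat -> nat -> bool) (r : R)
  (i : nat) (phi : R) (sq : actseq) : Prop :=
  valid_seq m sq /\
  forall (c : config) j, (j < n)%nat ->
    let c' := run alpha r sq c in
    px (c' j) = px (c j) /\ py (c' j) = py (c j) /\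
    (if alpha i j then angle_eq (th (c' j)) (th (c j))
     else angle_eq (th (c' j)) (th (c j) + phi)).

Definition f_seq (m : nat) (r phi : R) : actseq := (m, r * phi) :: nil.

Definition is_rot_composition (n m : nat) (alpha : nat -> nat -> bool) (r : R)
  (sq : actseq) : Prop :=
  exists pieces : list actseq,
    sq = concat pieces /\
    Forall (fun p =>
      (exists i phi, (1 <= i <= m - 1)%nat /\ is_h n m alpha r i phi p) \/
      (exists phi, 0 < phi /\ p = f_seq m r phi)) pieces.

Definition is_Rot_pi_pi_0 (n m : nat) (alpha : nat -> nat -> bool) (r : R)
  (l1 l2 k : nat) (sq : actseq) : Prop :=
  is_rot_composition n m alpha r sq /\
  forall c : config,
    let c' := run alpha r sq c in
    (forall j, (j < n)%nat -> px (c' j) = px (c j) /\ py (c' j) = py (c j)) /\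
    angle_eq (th (c' l1)) (th (c l1) + PI) /\
    angle_eq (th (c' l2)) (th (c l2) + PI) /\
    angle_eq (th (c' k)) (th (c k)).

(* Robots outside G_khat are untouched by g and not moved by the rotation, so
   they never move.  A member of G_khat with initial heading t is moved by d
   along its current heading by each g, and in between the rotation turns it by
   phi in place, so its net displacement is
   d (cos t + cos (t + phi), sin t + sin (t + phi)).
   For l1, l2 we have phi = PI and the two translations cancel; for k we have
   phi = 0 and they add up to 2d. *)

From Stdlib Require Import Reals List ZArith.
Open Scope R_scope.

Lemma cos_sin_2PI_IZR (z : Z) : cos (2 * PI * IZR z) = 1 /\ sin (2 * PI * IZR z) = 0.
Proof.
  assert (sin_PI_z : sin (PI * IZR z) = 0) by (apply sin_eq_0_1; exists z; ring).
  replace (2 * PI * IZR z) with (2 * (PI * IZR z)) by ring.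
  rewrite cos_2a_sin, sin_2a, sin_PI_z; split; ring.
Qed.

Lemma angle_eq_cos_sin (a b : R) : angle_eq a b -> cos a = cos b /\ sin a = sin b.
Proof.
  intros [z ->]; destruct (cos_sin_2PI_IZR z) as [Hc Hs].
  rewrite cos_plus, sin_plus, Hc, Hs; split; ring.
Qed.

Lemma angle_eq_trans (a b c : R) : angle_eq a b -> angle_eq b c -> angle_eq a c.
Proof.
  intros [z1 ->] [z2 ->]; exists (z1 + z2)%Z; rewrite plus_IZR; ring.
Qed.

Lemma angle_eq_addr (a b p : R) : angle_eq a b -> angle_eq (a + p) (b + p).
Proof. intros [z ->]; exists z; ring. Qed.

Lemma run_app (alpha : nat -> nat -> bool) (r : R) (s1 s2 : actseq) (c : config) :
  run alpha r (s1 ++ s2) c = run alpha r s2 (run alpha r s1 c).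
Proof. apply fold_left_app. Qed.

Section TranslateTwice.

Variables (n m : nat) (alpha : nat -> nat -> bool) (r : R) (i : nat) (d : R).
Variable g : actseq.
Hypothesis Hg : is_g n m alpha r i d g.

Lemma run_g_nonmember (c : config) (j : nat) :
  (j < n)%nat -> alpha i j = false ->
  px (run alpha r g c j) = px (c j) /\ py (run alpha r g c j) = py (c j).
Proof.
  intros Hj Hout; pose proof (proj2 Hg c j Hj) as Hcj; cbv zeta in Hcj.
  rewrite Hout in Hcj; tauto.
Qed.

Lemma run_g_turn_g_member (c c2 : config) (j : nat) (phi : R) :
  (j < n)%nat -> alpha i j = true ->
  px (c2 j) = px (run alpha r g c j) -> py (c2 j) = py (run alpha r g c j) ->
  angle_eq (th (c2 j)) (th (run alpha r g c j) + phi) ->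
  px (run alpha r g c2 j) = px (c j) + d * (cos (th (c j)) + cos (th (c j) + phi)) /\
  py (run alpha r g c2 j) = py (c j) + d * (sin (th (c j)) + sin (th (c j) + phi)) /\
  angle_eq (th (run alpha r g c2 j)) (th (c j) + phi).
Proof.
  intros Hj Hin Hx Hy Hturn.
  pose proof (proj2 Hg c j Hj) as Hc; pose proof (proj2 Hg c2 j Hj) as Hc2.
  cbv zeta in Hc, Hc2; rewrite Hin in Hc, Hc2.
  destruct Hc as [Hcx [Hcy Hcth]]; destruct Hc2 as [Hc2x [Hc2y Hc2th]].
  assert (Hturn' : angle_eq (th (c2 j)) (th (c j) + phi))
    by exact (angle_eq_trans _ _ _ Hturn (angle_eq_addr _ _ _ Hcth)).
  destruct (angle_eq_cos_sin _ _ Hturn') as [Hcos Hsin].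
  rewrite Hc2x, Hc2y, Hx, Hy, Hcx, Hcy, Hcos, Hsin.
  split; [ring | split; [ring | exact (angle_eq_trans _ _ _ Hc2th Hturn')]].
Qed.

End TranslateTwice.

Theorem mainTheorem5 (n m : nat) (alpha : nat -> nat -> bool) (r : R)
  (Hr : 0 < r) (Hgroups : groups_ok n m alpha)
  (k khat l1 l2 : nat)
  (Hkhat : (1 <= khat <= m - 1)%nat)
  (Hk : (k < n)%nat) (Hl1 : (l1 < n)%nat) (Hl2 : (l2 < n)%nat)
  (Hl12 : l1 <> l2) (Hl1k : l1 <> k) (Hl2k : l2 <> k)
  (Hmk : alpha khat k = true) (Hm1 : alpha khat l1 = true)
  (Hm2 : alpha khat l2 = true)
  (d : R) (Hd : 0 < d)
  (g rot : actseq)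
  (Hg : is_g n m alpha r khat d g)
  (Hrot : is_Rot_pi_pi_0 n m alpha r l1 l2 k rot) :
  forall c : config,
    let c' := run alpha r (g ++ rot ++ g) c in
    (forall j, (j < n)%nat -> alpha khat j = false ->
       px (c' j) = px (c j) /\ py (c' j) = py (c j)) /\
    (px (c' l1) = px (c l1) /\ py (c' l1) = py (c l1)) /\
    (px (c' l2) = px (c l2) /\ py (c' l2) = py (c l2)) /\
    (px (c' k) = px (c k) + 2 * d * cos (th (c k)) /\
     py (c' k) = py (c k) + 2 * d * sin (th (c k)) /\
     angle_eq (th (c' k)) (th (c k))).
Proof.
  intros c c'; subst c'; rewrite !run_app.
  set (c1 := run alpha r g c); set (c2 := run alpha r rot c1).
  destruct (proj2 Hrot c1) as [Hpos [Hturn1 [Hturn2 Hturnk]]].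
  fold c2 in Hpos, Hturn1, Hturn2, Hturnk.
  rewrite <- (Rplus_0_r (th (c1 k))) in Hturnk.
  assert (Hback : forall l, (l < n)%nat -> alpha khat l = true ->
      angle_eq (th (c2 l)) (th (c1 l) + PI) ->
      px (run alpha r g c2 l) = px (c l) /\ py (run alpha r g c2 l) = py (c l)).
  { intros l Hl Hin Hturn; destruct (Hpos l Hl) as [Hx Hy].
    destruct (run_g_turn_g_member _ _ _ _ _ _ _ Hg c c2 l PI Hl Hin Hx Hy Hturn)
      as [Hx' [Hy' _]].
    rewrite Hx', Hy', neg_cos, neg_sin; split; ring. }
  split; [| split; [| split]].
  - intros j Hj Hout; destruct (Hpos j Hj) as [Hx Hy].
    destruct (run_g_nonmember _ _ _ _ _ _ _ Hg c2 j Hj Hout) as [Hx' Hy'].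
    destruct (run_g_nonmember _ _ _ _ _ _ _ Hg c j Hj Hout) as [Hx1 Hy1].
    rewrite Hx', Hy', Hx, Hy; split; assumption.
  - exact (Hback l1 Hl1 Hm1 Hturn1).
  - exact (Hback l2 Hl2 Hm2 Hturn2).
  - destruct (Hpos k Hk) as [Hx Hy].
    destruct (run_g_turn_g_member _ _ _ _ _ _ _ Hg c c2 k 0 Hk Hmk Hx Hy Hturnk)
      as [Hx' [Hy' Hth']].
    rewrite Rplus_0_r in Hx', Hy', Hth'.
    rewrite Hx', Hy'; split; [ring | split; [ring | exact Hth']].
Qed.
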